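(* Let $\tilde u\in T^1\mathbb H$ be tangent to an oriented pair $(\tilde H,p)$, and write $\tilde v=\mathrm{Wind}_{(\tilde H,p)}(\tilde u)$, $\tau=\tau_{\tilde H,p,\tilde u}$, $\ell=\ell(\tilde H,p)$. Then for every $t\ge 0$, $$\min\{d_1(g_{t+\tau}\tilde v, g_t\tilde u),\ d_1(g_{t+\tau}\tilde v, p\,g_t\tilde u)\}\le 12\,\ell.$$
   Context: $\mathbb H$ is the hyperbolic plane with distance $d$; for $v\in T^1\mathbb H$, $t\mapsto v(t)$ is the unit-speed geodesic with initial vector $v$, $g_tv$ its tangent vector at time $t$, $v(+\infty)$ its forward endpoint. $d_1(v,w)=d(v(0),w(0))+d(v(1),w(1))$ on $T^1\mathbb H$. Busemann function: $B_\xi(x,y)=\lim_{t\to\infty}(d(x,c(t))-d(y,c(t)))$ for a geodesic ray $c$ converging to $\xi$. For a horocycle $\tilde H$ and a parabolic isometry $p$ preserving it: $\ell(\tilde H,p)$ is the horocyclic arc length between $x$ and $px$ for $x\in\tilde H$; the positive orientation is that of an arc-length parametrization with $p\tilde H(s)=\tilde H(s+\ell(\tilde H,p))$. $\tilde u$ is tangent to the oriented pair $(\tilde H,p)$ if $\tilde u(\mathbb R^+)$ is tangent to $\tilde H$ at some $\tilde u(t_0)=\tilde H(s_0)$, $t_0\ge0$, with $\frac{d\tilde u}{dt}(t_0)=\frac{d\tilde H}{ds}(s_0)$ for a positively oriented parametrization. The winding $\mathrm{Wind}_{(\tilde H,p)}(\tilde u)$ is the unique $w\in T^1\mathbb H$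 with $w(0)=\tilde u(0)$ and $w(+\infty)=p\,\tilde u(+\infty)$. The winding time is $\tau_{\tilde H,p,\tilde u}=B_{\tilde u(+\infty)}(p^{-1}\tilde u(0),\tilde u(0))$. *)

From Stdlib Require Import Reals.
From Coquelicot Require Import Coquelicot.
Open Scope R_scope.

Definition pt := (R * R)%type.

Definition inH (z : pt) : Prop := 0 < snd z.

Definition arcosh (x : R) : R := ln (x + sqrt (x ^ 2 - 1)).

Definition hdist (z w : pt) : R :=
  arcosh (1 + ((fst z - fst w) ^ 2 + (snd z - snd w) ^ 2)
              / (2 * snd z * snd w)).

(* A unit tangent vector v is identified with its unit-speed geodesic
   t |-> v(t) (isometric embedding R -> H); g_t v is the time shift. *)
Definition is_geodesic (c : R -> pt) : Prop :=
  (forall t, inH (c t)) /\ (forall s t, hdist (c s) (c t) = Rabs (s - t)).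

Definition gflow (t : R) (c : R -> pt) : R -> pt := fun s => c (s + t).

Definition dist_d1 (v w : R -> pt) : R := hdist (v 0) (w 0) + hdist (v 1) (w 1).

(* v(+oo) = w(+oo): the forward rays are asymptotic *)
Definition same_fwd_endpoint (v w : R -> pt) : Prop :=
  exists M, forall t, 0 <= t -> hdist (v t) (w t) <= M.

(* Busemann function B_{c(+oo)}(x,y), computed along the ray c itself *)
Definition busemann (c : R -> pt) (x y : pt) : R :=
  real (Lim (fun t => hdist x (c t) - hdist y (c t)) p_infty).

(* Moebius transformations z |-> (a z + b)/(c z + d) *)
Record mob := Mob { ma : R; mb : R; mc : R; md : R }.

Definition mob_act (m : mob) (z : pt) : pt :=
  let x := fst z in let y := snd z in
  let D := (mc m * x + md m) ^ 2 + (mc m * y) ^ 2 in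
  (((ma m * x + mb m) * (mc m * x + md m) + ma m * mc m * y ^ 2) / D,
   (ma m * md m - mb m * mc m) * y / D).

Definition mob_inv (m : mob) : mob := Mob (md m) (- mb m) (- mc m) (ma m).

Definition is_parabolic (m : mob) : Prop :=
  ma m * md m - mb m * mc m = 1 /\ (ma m + md m) ^ 2 = 4 /\
  ~ (ma m = 1 /\ mb m = 0 /\ mc m = 0 /\ md m = 1) /\
  ~ (ma m = -1 /\ mb m = 0 /\ mc m = 0 /\ md m = -1).

Definition is_horocycle (S : pt -> Prop) : Prop :=
  (exists c, 0 < c /\ forall z, S z <-> snd z = c) \/
  (exists x0 r, 0 < r /\ forall z,
      S z <-> ((fst z - x0) ^ 2 + (snd z - r) ^ 2 = r ^ 2 /\ 0 < snd z)).

Definition arclength_param (S : pt -> Prop) (h : R -> pt) : Prop :=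
  (forall s, S (h s)) /\ (forall z, S z -> exists s, h s = z) /\
  (forall s1 s2, h s1 = h s2 -> s1 = s2) /\
  forall s, exists a b, is_derive (fun r => fst (h r)) s a /\
                        is_derive (fun r => snd (h r)) s b /\
                        a ^ 2 + b ^ 2 = (snd (h s)) ^ 2.

(* h is a positively oriented arc-length parametrization of the horocycle S
   for p, and ell = ell(S,p):   p (h s) = h (s + ell). *)
Definition pos_param (S : pt -> Prop) (p : mob) (h : R -> pt) (ell : R) : Prop :=
  arclength_param S h /\ 0 < ell /\ forall s, mob_act p (h s) = h (s + ell).

Definition tangent_to (u h : R -> pt) : Prop :=
  exists t0 s0 a b, 0 <= t0 /\ u t0 = h s0 /\
    is_derive (fun r => fst (u r)) t0 a /\ is_derive (fun r => snd (u r)) t0 b /\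
    is_derive (fun r => fst (h r)) s0 a /\ is_derive (fun r => snd (h r)) s0 b.

(* w = Wind_{(S,p)}(u): w(0) = u(0), w(+oo) = p u(+oo) *)
Definition is_winding (p : mob) (u w : R -> pt) : Prop :=
  is_geodesic w /\ w 0 = u 0 /\ same_fwd_endpoint w (fun t => mob_act p (u t)).

Definition winding_time (p : mob) (u : R -> pt) : R :=
  busemann u (mob_act (mob_inv p) (u 0)) (u 0).

(* Map the horocycle to a horizontal line by a Moebius transformation; then [p] becomes a
   translation, and after a further similarity [p] is [z |-> z + ell] while [u] is the unit
   semicircle from [-1] to [1], tangent at time [t0 >= 0] to the horocycle [y = 1] at [i].
   The winding [v] starts at [u 0] and ends at [1 + ell]. The inversion
   [z |-> -1 / (z - 1 - ell)] makes [v] and [p u] vertical, and in these coordinates the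
   winding time [tau] lies in [[0, 2 ell]]. For [t >= t0], [v (t + tau)] is within [2 ell]
   of [p (u t)] (horizontal offset at most [ell / 2] at height at least [1 / 2]); for
   [t <= t0 + 1] it is within [tau + 3 ell] of [u t]. So the relevant [d_1] is at most
   [10 ell]. *)

From Stdlib Require Import Reals Lra Psatz FunctionalExtensionality.
From Coquelicot Require Import Coquelicot.
Open Scope R_scope.

(** * Hyperbolic cosine and its inverse *)

Lemma exp_le_compat x y : x <= y -> exp x <= exp y.
Proof.
  intros [Hlt | ->]; [left; apply exp_increasing; exact Hlt | apply Rle_refl].
Qed.

Lemma exp_ge_1 x : 0 <= x -> 1 <= exp x.
Proof. intros Hx; rewrite <- exp_0; apply exp_le_compat, Hx. Qed.

Lemma cosh_exp x : cosh x = (exp x + / exp x) / 2.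
Proof. unfold cosh; rewrite exp_Ropp; reflexivity. Qed.

Lemma cosh_ge_1 x : 1 <= cosh x.
Proof.
  rewrite cosh_exp. assert (He := exp_pos x). set (e := exp x) in *.
  assert (Hsq : e + / e - 2 = (e - 1) ^ 2 / e) by (field; lra).
  assert (0 <= (e - 1) ^ 2 / e) by (apply Rdiv_le_0_compat; [apply pow2_ge_0 | lra]).
  lra.
Qed.

Lemma cosh_abs x : cosh (Rabs x) = cosh x.
Proof.
  unfold cosh, Rabs; destruct (Rcase_abs x); [rewrite Ropp_involutive|]; lra.
Qed.

Lemma cosh_le x y : 0 <= x -> x <= y -> cosh x <= cosh y.
Proof.
  intros Hx Hxy. rewrite !cosh_exp.
  assert (Hex := exp_ge_1 x Hx). assert (Hexy := exp_le_compat x y Hxy).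
  assert (Hdiff : exp y + / exp y - (exp x + / exp x)
                  = (exp y - exp x) * (exp x * exp y - 1) / (exp x * exp y))
    by (field; split; apply Rgt_not_eq, exp_pos).
  assert (0 <= (exp y - exp x) * (exp x * exp y - 1) / (exp x * exp y)).
  { apply Rdiv_le_0_compat; [apply Rmult_le_pos; nra|].
    apply Rmult_lt_0_compat; apply exp_pos. }
  lra.
Qed.

(* From [1 + d/2 <= exp (d/2)] and [cosh d = 1 + 2 sinh (d/2) ^ 2]. *)
Lemma cosh_ge_1_sq d : 0 <= d -> 1 + d ^ 2 / 8 <= cosh d.
Proof.
  intro Hd. rewrite cosh_exp.
  assert (Hhalf : 1 + d / 2 <= exp (d / 2)) by apply exp_ineq1_le.
  assert (Hsq : exp d = exp (d / 2) ^ 2).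
  { simpl. rewrite Rmult_1_r, <- exp_plus. f_equal; lra. }
  rewrite Hsq. assert (Hpos := exp_pos (d / 2)). set (A := exp (d / 2)) in *.
  assert (Hsinh : d / 2 <= A - / A).
  { assert (/ A <= / (1 + d / 2)) by (apply Rinv_le_contravar; lra).
    assert (/ (1 + d / 2) <= 1) by (rewrite <- Rinv_1; apply Rinv_le_contravar; lra).
    lra. }
  assert (Hcosh : (A ^ 2 + / A ^ 2) / 2 = 1 + (A - / A) ^ 2 / 2) by (field; lra).
  rewrite Hcosh. nra.
Qed.

Lemma arcosh_cosh d : 0 <= d -> arcosh (cosh d) = d.
Proof.
  intro Hd. unfold arcosh. rewrite cosh_exp.
  assert (Hpos := exp_pos d). assert (H1 := exp_ge_1 d Hd). set (e := exp d) in *.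
  assert (Hsq : ((e + / e) / 2) ^ 2 - 1 = ((e - / e) / 2) ^ 2) by (field; lra).
  assert (/ e <= 1) by (rewrite <- Rinv_1; apply Rinv_le_contravar; lra).
  rewrite Hsq, sqrt_pow2 by lra.
  replace ((e + / e) / 2 + (e - / e) / 2) with e by (field; lra).
  apply ln_exp.
Qed.

Lemma cosh_arcosh x : 1 <= x -> cosh (arcosh x) = x.
Proof.
  intro Hx. unfold arcosh. rewrite cosh_exp.
  assert (Hs : 0 <= x ^ 2 - 1) by nra.
  assert (Hss := pow2_sqrt _ Hs). assert (Hsp := sqrt_pos (x ^ 2 - 1)).
  set (s := sqrt (x ^ 2 - 1)) in *.
  rewrite exp_ln by lra. field_simplify; [|lra]. rewrite Hss. field. lra.
Qed.

Lemma arcosh_le x y : 1 <= x -> x <= y -> arcosh x <= arcosh y.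
Proof.
  intros Hx Hxy. unfold arcosh.
  assert (0 <= sqrt (x ^ 2 - 1)) by apply sqrt_pos.
  assert (sqrt (x ^ 2 - 1) <= sqrt (y ^ 2 - 1)) by (apply sqrt_le_1_alt; nra).
  apply ln_le; lra.
Qed.

Lemma arcosh_ge_0 x : 1 <= x -> 0 <= arcosh x.
Proof. intro Hx. rewrite <- (arcosh_cosh 0), cosh_0 by lra. apply arcosh_le; lra. Qed.

(** * The distance formula *)

Definition hcosh (z w : pt) : R :=
  1 + ((fst z - fst w) ^ 2 + (snd z - snd w) ^ 2) / (2 * snd z * snd w).

Lemma hdist_hcosh z w : hdist z w = arcosh (hcosh z w).
Proof. reflexivity. Qed.

Lemma hcosh_ge_1 z w : inH z -> inH w -> 1 <= hcosh z w.
Proof.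
  unfold inH, hcosh; intros Hz Hw.
  assert (0 <= ((fst z - fst w) ^ 2 + (snd z - snd w) ^ 2) / (2 * snd z * snd w)); [|lra].
  apply Rdiv_le_0_compat; [apply Rplus_le_le_0_compat; apply pow2_ge_0|].
  apply Rmult_lt_0_compat; lra.
Qed.

Lemma hcosh_mul z w : inH z -> inH w ->
  2 * snd z * snd w * hcosh z w
  = 2 * snd z * snd w + (fst z - fst w) ^ 2 + (snd z - snd w) ^ 2.
Proof. unfold inH, hcosh; intros; field; lra. Qed.

Lemma cosh_hdist z w : inH z -> inH w -> cosh (hdist z w) = hcosh z w.
Proof. intros; apply cosh_arcosh, hcosh_ge_1; assumption. Qed.

Lemma hdist_ge_0 z w : inH z -> inH w -> 0 <= hdist z w.
Proof. intros; apply arcosh_ge_0, hcosh_ge_1; assumption. Qed.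

Lemma hdist_le z w d : inH z -> inH w -> 0 <= d -> hcosh z w <= cosh d -> hdist z w <= d.
Proof.
  intros Hz Hw Hd Hle. rewrite hdist_hcosh, <- (arcosh_cosh d Hd).
  apply arcosh_le; [apply hcosh_ge_1|]; assumption.
Qed.

Lemma hcosh_le z w d : inH z -> inH w -> hdist z w <= d -> hcosh z w <= cosh d.
Proof.
  intros Hz Hw Hle. rewrite <- cosh_hdist by assumption.
  apply cosh_le; [apply hdist_ge_0|]; assumption.
Qed.

Lemma hdist_le_of_sq z w d : inH z -> inH w -> 0 <= d ->
  (fst z - fst w) ^ 2 + (snd z - snd w) ^ 2 <= snd z * snd w * d ^ 2 / 4 ->
  hdist z w <= d.
Proof.
  intros Hz Hw Hd Hle. apply hdist_le; try assumption.
  assert (Hcosh := cosh_ge_1_sq d Hd). unfold hcosh. unfold inH in *.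
  assert (((fst z - fst w) ^ 2 + (snd z - snd w) ^ 2) / (2 * snd z * snd w) <= d ^ 2 / 8); [|lra].
  apply Rmult_le_reg_r with (2 * snd z * snd w); [nra|].
  unfold Rdiv. rewrite Rmult_assoc, Rinv_l by nra. nra.
Qed.

Lemma hcosh_geodesic c s t : is_geodesic c -> hcosh (c s) (c t) = cosh (s - t).
Proof.
  intros [Hin Hd]. rewrite <- cosh_hdist, Hd by apply Hin. apply cosh_abs.
Qed.

(** * Moebius transformations *)

Definition mdet (m : mob) : R := ma m * md m - mb m * mc m.

Definition mmul (m n : mob) : mob :=
  Mob (ma m * ma n + mb m * mc n) (ma m * mb n + mb m * md n)
      (mc m * ma n + md m * mc n) (mc m * mb n + md m * md n).

Definition mob_den (m : mob) (z : pt) : R :=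
  (mc m * fst z + md m) ^ 2 + (mc m * snd z) ^ 2.

Lemma mob_actE m z : mob_act m z =
  (((ma m * fst z + mb m) * (mc m * fst z + md m) + ma m * mc m * snd z ^ 2) / mob_den m z,
   mdet m * snd z / mob_den m z).
Proof. reflexivity. Qed.

Lemma mdet_mul m n : mdet (mmul m n) = mdet m * mdet n.
Proof. unfold mdet, mmul; simpl; ring. Qed.

Lemma mdet_inv m : mdet (mob_inv m) = mdet m.
Proof. unfold mdet, mob_inv; simpl; ring. Qed.

Lemma mob_den_pos m z : mdet m <> 0 -> inH z -> 0 < mob_den m z.
Proof.
  destruct m as [a b c d]; destruct z as [x y].
  unfold mdet, mob_den, inH; simpl; intros Hdet Hy.
  destruct (Req_dec c 0) as [->|Hc].
  - assert (d <> 0) by (intro; apply Hdet; subst; ring).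
    assert (0 < d * d) by (apply Rsqr_pos_lt; assumption).
    simpl; lra.
  - assert (0 < (c * y) * (c * y))
      by (apply Rsqr_pos_lt, Rmult_integral_contrapositive; split; lra).
    assert (0 <= (c * x + d) ^ 2) by apply pow2_ge_0.
    simpl in *; lra.
Qed.

Lemma mob_act_inH m z : 0 < mdet m -> inH z -> inH (mob_act m z).
Proof.
  intros Hm Hz. assert (Hden := mob_den_pos m z ltac:(lra) Hz).
  unfold inH in *; rewrite mob_actE; simpl.
  apply Rdiv_lt_0_compat; [apply Rmult_lt_0_compat|]; assumption.
Qed.

Lemma mob_den_mul m n z : mob_den n z <> 0 ->
  mob_den m (mob_act n z) = mob_den (mmul m n) z / mob_den n z.
Proof.
  rewrite mob_actE. destruct m as [a b c d]; destruct n as [a' b' c' d']; destruct z as [x y].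
  unfold mob_den, mdet, mmul; simpl; intro Hn.
  field. intro Hden; apply Hn; rewrite <- Hden; ring.
Qed.

Lemma mob_act_mul m n z : 0 < mdet m -> 0 < mdet n -> inH z ->
  mob_act m (mob_act n z) = mob_act (mmul m n) z.
Proof.
  intros Hm Hn Hz.
  assert (Hn0 := mob_den_pos n z ltac:(lra) Hz).
  assert (Hmn0 := mob_den_pos (mmul m n) z ltac:(rewrite mdet_mul; nra) Hz).
  rewrite (mob_actE m), mob_den_mul by lra.
  revert Hn0 Hmn0. rewrite !mob_actE.
  destruct m as [a b c d]; destruct n as [a' b' c' d']; destruct z as [x y].
  unfold mob_den, mdet, mmul; simpl; intros Hn0 Hmn0.
  f_equal; field; split; lra.
Qed.

Lemma hcosh_mob_act m z w : 0 < mdet m -> inH z -> inH w ->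
  hcosh (mob_act m z) (mob_act m w) = hcosh z w.
Proof.
  intros Hm Hz Hw.
  assert (Hz0 := mob_den_pos m z ltac:(lra) Hz).
  assert (Hw0 := mob_den_pos m w ltac:(lra) Hw).
  revert Hz0 Hw0 Hz Hw Hm. rewrite !mob_actE.
  destruct m as [a b c d]; destruct z as [x y]; destruct w as [x' y'].
  unfold hcosh, mob_den, mdet, inH; simpl; intros.
  field. repeat split; lra.
Qed.

Lemma hdist_mob_act m z w : 0 < mdet m -> inH z -> inH w ->
  hdist (mob_act m z) (mob_act m w) = hdist z w.
Proof. intros; rewrite !hdist_hcosh, hcosh_mob_act; auto. Qed.

Lemma mob_act_scalar k z : k <> 0 -> mob_act (Mob k 0 0 k) z = z.
Proof. intro Hk. destruct z as [x y]; unfold mob_act; simpl; f_equal; field; auto. Qed.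

Lemma mob_act_invK m z : 0 < mdet m -> inH z -> mob_act (mob_inv m) (mob_act m z) = z.
Proof.
  intros Hm Hz. rewrite mob_act_mul by (rewrite ?mdet_inv; assumption).
  replace (mmul (mob_inv m) m) with (Mob (mdet m) 0 0 (mdet m))
    by (destruct m; unfold mmul, mob_inv, mdet; simpl; f_equal; ring).
  apply mob_act_scalar; lra.
Qed.

Lemma mob_act_Kinv m z : 0 < mdet m -> inH z -> mob_act m (mob_act (mob_inv m) z) = z.
Proof.
  intros Hm Hz. rewrite mob_act_mul by (rewrite ?mdet_inv; assumption).
  replace (mmul m (mob_inv m)) with (Mob (mdet m) 0 0 (mdet m))
    by (destruct m; unfold mmul, mob_inv, mdet; simpl; f_equal; ring).
  apply mob_act_scalar; lra.
Qed.

(** * Geodesics through [i] *)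

(* The unit semicircle, i.e. the geodesic from [-1] to [1]; [semicircle (exp (- s))]
   is the point at signed distance [s] from [i = semicircle 1]. *)
Definition semicircle (e : R) : pt := ((1 - e ^ 2) / (1 + e ^ 2), 2 * e / (1 + e ^ 2)).

Lemma semicircle_snd_pos e : 0 < e -> 0 < snd (semicircle e).
Proof.
  intro He. unfold semicircle; simpl.
  apply Rdiv_lt_0_compat; [lra|]. generalize (pow2_ge_0 e); lra.
Qed.

Lemma sq_eq_0 x : x ^ 2 = 0 -> x = 0.
Proof. intro H. apply Rsqr_0_uniq. unfold Rsqr. simpl in H. lra. Qed.

Lemma semicircle_eq x y e : 0 < e -> 0 < y ->
  x = y * (/ e - e) / 2 -> hcosh (x, y) (0, 1) = (/ e + e) / 2 ->
  (x, y) = semicircle e.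
Proof.
  unfold hcosh; simpl. intros He Hy Hx Hcosh.
  assert (Hsq : (x - 0) ^ 2 + (y - 1) ^ 2 = ((/ e + e) / 2 - 1) * (2 * y)).
  { rewrite <- Hcosh. field. lra. }
  assert (Hy1 : (y * (/ e + e) / 2 - 1) ^ 2 = 0).
  { transitivity ((x - 0) ^ 2 + (y - 1) ^ 2 - ((/ e + e) / 2 - 1) * (2 * y)
                  + y ^ 2 * (/ e * e - 1)).
    - rewrite Hx. field. lra.
    - rewrite Hsq, Rinv_l by lra. ring. }
  apply sq_eq_0 in Hy1.
  assert (Hpos : 0 < 1 + e ^ 2) by (generalize (pow2_ge_0 e); lra).
  assert (Hy' : y = 2 * e / (1 + e ^ 2)).
  { replace y with (y * (/ e + e) / 2 * (2 * e / (1 + e ^ 2))) by (field; lra).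
    replace (y * (/ e + e) / 2) with 1 by lra. ring. }
  unfold semicircle. f_equal; [|exact Hy']. rewrite Hx, Hy'. field. lra.
Qed.

Lemma hcosh_derive_at_i c t0 z : inH z -> c t0 = (0, 1) ->
  is_derive (fun r => fst (c r)) t0 1 -> is_derive (fun r => snd (c r)) t0 0 ->
  is_derive (fun r => hcosh z (c r)) t0 (- fst z / snd z).
Proof.
  unfold inH, hcosh; intros Hz Hc Hx Hy.
  set (X := fun r => fst (c r)) in *. set (Y := fun r => snd (c r)) in *.
  assert (Hx0 : X t0 = 0) by (unfold X; rewrite Hc; reflexivity).
  assert (Hy0 : Y t0 = 1) by (unfold Y; rewrite Hc; reflexivity).
  apply (is_derive_ext
    (fun r => 1 + ((fst z - X r) ^ 2 + (snd z - Y r) ^ 2) / (2 * snd z * Y r)));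
    [reflexivity|].
  auto_derive.
  - repeat split; try (eexists; eassumption). rewrite Hy0. lra.
  - replace (Derive (fun x => X x) t0) with 1 by (symmetry; apply is_derive_unique, Hx).
    replace (Derive (fun x => Y x) t0) with 0 by (symmetry; apply is_derive_unique, Hy).
    rewrite Hx0, Hy0.
    field. lra.
Qed.

(* A geodesic through [i] with horizontal unit velocity is the unit semicircle:
   differentiating [hcosh (c (t0 + s)) (c r) = cosh (t0 + s - r)] at [r = t0]
   gives the abscissa of [c (t0 + s)], and [r = t0] itself gives its distance to [i]. *)
Lemma geodesic_semicircle c t0 : is_geodesic c -> c t0 = (0, 1) ->
  is_derive (fun r => fst (c r)) t0 1 -> is_derive (fun r => snd (c r)) t0 0 ->
  forall s, c (t0 + s) = semicircle (exp (- s)).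
Proof.
  intros Hg Hc Hx Hy s.
  assert (Hz : inH (c (t0 + s))) by apply (proj1 Hg).
  assert (Dhcosh := hcosh_derive_at_i c t0 _ Hz Hc Hx Hy).
  assert (Dcosh : is_derive (fun r => hcosh (c (t0 + s)) (c r)) t0 (- ((exp s - exp (- s)) / 2))).
  { apply (is_derive_ext (fun r => cosh (t0 + s - r))).
    { intro r. symmetry. apply hcosh_geodesic, Hg. }
    unfold cosh. auto_derive; [exact I|]. replace (t0 + s + - t0) with s by ring. lra. }
  assert (Hdist : hcosh (c (t0 + s)) (c t0) = cosh s).
  { rewrite hcosh_geodesic by exact Hg. f_equal; ring. }
  assert (Hsinh := is_derive_unique _ _ _ Dhcosh). rewrite (is_derive_unique _ _ _ Dcosh) in Hsinh.
  rewrite Hc in Hdist. unfold inH in Hz.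
  destruct (c (t0 + s)) as [x y]; simpl in Hz, Hsinh.
  assert (He : 0 < exp (- s)) by apply exp_pos.
  apply semicircle_eq; [exact He | exact Hz | |].
  - rewrite exp_Ropp, Rinv_inv, <- exp_Ropp.
    apply (f_equal (fun a => - a * y)) in Hsinh. field_simplify in Hsinh; lra.
  - rewrite Hdist, exp_Ropp, Rinv_inv, <- exp_Ropp. unfold cosh. lra.
Qed.

(** * Geodesics asymptotic to a vertical geodesic *)

Lemma eq_0_of_exp_decay D G T0 : (forall T, T0 <= T -> Rabs D <= G * exp (- T)) -> D = 0.
Proof.
  intro Hdecay. destruct (Req_dec D 0) as [|HD]; [assumption|exfalso].
  assert (HA : 0 < Rabs D) by (apply Rabs_pos_lt, HD).
  assert (HG : 0 < G).
  { specialize (Hdecay T0 (Rle_refl _)). assert (0 < exp (- T0)) by apply exp_pos. nra. }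
  set (T := Rmax T0 (G / Rabs D)).
  specialize (Hdecay T (Rmax_l _ _)). rewrite exp_Ropp in Hdecay.
  assert (HT : G / Rabs D <= T) by apply Rmax_r.
  assert (HexpT := exp_ineq1_le T). assert (Hpos := exp_pos T).
  assert (G < Rabs D * exp T).
  { assert (G = Rabs D * (G / Rabs D)) by (field; lra). nra. }
  assert (Rabs D * exp T <= G).
  { apply Rmult_le_reg_r with (/ exp T); [apply Rinv_0_lt_compat, Hpos|].
    rewrite Rmult_assoc, Rinv_r by lra. lra. }
  lra.
Qed.

Lemma abs_le_of_sq x r : 0 <= r -> x ^ 2 <= r ^ 2 -> Rabs x <= r.
Proof.
  intros Hr H. rewrite <- (Rabs_pos_eq r Hr). apply Rsqr_le_abs_0.
  unfold Rsqr. simpl in H. lra.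
Qed.

(* The hypothesis is [hcosh (X, Y) (al, Q) <= K] with the denominator cleared. *)
Lemma hcosh_box X Y al Q K : 0 < Q -> 1 <= K -> 0 < Y ->
  (X - al) ^ 2 + (Y - Q) ^ 2 <= 2 * (K - 1) * Y * Q ->
  Q <= 2 * K * Y /\ Y <= 2 * K * Q /\ Rabs X <= Rabs al + 2 * K * Q.
Proof.
  intros HQ HK HY Hbox.
  assert (HX2 : 0 <= (X - al) ^ 2) by apply pow2_ge_0.
  assert (HYu : Y <= 2 * K * Q) by nra.
  split; [nra|]. split; [exact HYu|].
  assert (HXal : Rabs (X - al) <= 2 * K * Q) by (apply abs_le_of_sq; nra).
  replace X with ((X - al) + al) by ring.
  eapply Rle_trans; [apply Rabs_triang|]. lra.
Qed.

(* The difference of the two distance identities is linear in [(X, Y)]. *)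
Lemma hcosh_difference X Y xz yz a b T s :
  2 * Y * yz * cosh (T - s) = 2 * Y * yz + (X - xz) ^ 2 + (Y - yz) ^ 2 ->
  2 * Y * b * cosh T = 2 * Y * b + (X - a) ^ 2 + (Y - b) ^ 2 ->
  Y * (exp T * (yz * exp (- s) - b) + (yz * exp s - b) / exp T)
  = - 2 * X * (xz - a) + (xz ^ 2 + yz ^ 2 - a ^ 2 - b ^ 2).
Proof.
  intros H1 H2.
  transitivity (2 * Y * yz * cosh (T - s) - 2 * Y * b * cosh T).
  - assert (Hts : cosh (T - s) = (exp T * exp (- s) + exp s / exp T) / 2).
    { rewrite cosh_exp. unfold Rminus. rewrite exp_plus, !exp_Ropp.
      field. split; apply Rgt_not_eq, exp_pos. }
    rewrite Hts, cosh_exp. field. apply Rgt_not_eq, exp_pos.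
  - rewrite H1, H2. ring.
Qed.

Lemma offset_triangle X Y e Dl Dp d C : 0 < Y -> 0 < e ->
  Y * (e * Dl + Dp / e) = - 2 * X * d + C ->
  Y * e * Rabs Dl <= Y * Rabs Dp / e + 2 * Rabs X * Rabs d + Rabs C.
Proof.
  intros HY He Hid.
  assert (Hrel : Y * e * Dl = - (Y * (Dp / e)) + (- 2 * X * d + C))
    by (rewrite <- Hid; field; lra).
  replace (Y * e * Rabs Dl) with (Rabs (Y * e * Dl))
    by (rewrite !Rabs_mult, (Rabs_pos_eq Y), (Rabs_pos_eq e); lra).
  rewrite Hrel.
  eapply Rle_trans; [apply Rabs_triang|].
  rewrite Rabs_Ropp. eapply Rle_trans; [apply Rplus_le_compat_l, Rabs_triang|].
  rewrite Rabs_mult, (Rabs_pos_eq Y), Rabs_div, (Rabs_pos_eq e) by lra.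
  replace (- 2 * X * d) with (- (2 * (X * d))) by ring.
  rewrite Rabs_Ropp, Rabs_mult, Rabs_mult, (Rabs_pos_eq 2) by lra. unfold Rdiv. lra.
Qed.

Lemma vertical_offset_decay xz yz a b al be K X Y T s :
  0 < be -> 1 <= K -> 0 < Y -> 0 <= T ->
  2 * Y * yz * cosh (T - s) = 2 * Y * yz + (X - xz) ^ 2 + (Y - yz) ^ 2 ->
  2 * Y * b * cosh T = 2 * Y * b + (X - a) ^ 2 + (Y - b) ^ 2 ->
  (X - al) ^ 2 + (Y - be * exp T) ^ 2 <= 2 * (K - 1) * Y * (be * exp T) ->
  Rabs (yz * exp (- s) - b) <=
   (Rabs (yz * exp s - b)
    + 2 * K * (2 * Rabs al * Rabs (xz - a) + Rabs (xz ^ 2 + yz ^ 2 - a ^ 2 - b ^ 2)) / be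
    + 8 * K ^ 2 * Rabs (xz - a)) * exp (- T).
Proof.
  intros Hbe HK HY HT H1 H2 Hbox.
  assert (Hid := hcosh_difference X Y xz yz a b T s H1 H2).
  assert (He1 := exp_ge_1 T HT). rewrite (exp_Ropp T). set (e := exp T) in *.
  assert (HQ : 0 < be * e) by nra.
  destruct (hcosh_box X Y al (be * e) K HQ HK HY Hbox) as [HQY [_ HXb]].
  set (Dl := yz * exp (- s) - b) in *. set (Dp := yz * exp s - b) in *.
  set (C := xz ^ 2 + yz ^ 2 - a ^ 2 - b ^ 2) in *.
  set (r := Rabs (xz - a)). assert (Hr : 0 <= r) by apply Rabs_pos.
  assert (Hal := Rabs_pos al). assert (HC := Rabs_pos C). assert (HDp := Rabs_pos Dp).
  assert (Htri := offset_triangle X Y e Dl Dp (xz - a) C HY ltac:(lra) Hid). fold r in Htri.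
  assert (Hinv : Y * Rabs Dp / e <= Y * Rabs Dp).
  { assert (/ e <= 1) by (rewrite <- Rinv_1; apply Rinv_le_contravar; lra).
    unfold Rdiv. assert (0 <= Y * Rabs Dp) by nra. nra. }
  assert (Hbe2 : 2 * Rabs al * r + Rabs C <= Y * (2 * K * (2 * Rabs al * r + Rabs C) / be)).
  { replace (Y * (2 * K * (2 * Rabs al * r + Rabs C) / be))
      with (Y * (2 * K) / be * (2 * Rabs al * r + Rabs C)) by (field; lra).
    assert (1 <= Y * (2 * K) / be).
    { apply Rmult_le_reg_r with be; [lra|]. field_simplify; nra. }
    assert (0 <= 2 * Rabs al * r + Rabs C) by nra. nra. }
  assert (HXr : 2 * Rabs X * r <= 2 * Rabs al * r + Y * (8 * K ^ 2 * r)).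
  { assert (2 * Rabs X * r <= 2 * (Rabs al + 2 * K * (be * e)) * r)
      by (apply Rmult_le_compat_r; lra).
    assert (0 <= 4 * K * r * (2 * K * Y - be * e))
      by (apply Rmult_le_pos; [apply Rmult_le_pos|]; lra).
    simpl. lra. }
  apply Rmult_le_reg_r with (Y * e); [nra|].
  replace ((Rabs Dp + 2 * K * (2 * Rabs al * r + Rabs C) / be + 8 * K ^ 2 * r) * / e * (Y * e))
    with (Y * Rabs Dp + Y * (2 * K * (2 * Rabs al * r + Rabs C) / be) + Y * (8 * K ^ 2 * r))
    by (field; lra).
  lra.
Qed.

Lemma geodesic_vertical_height w a b al be M : is_geodesic w -> w 0 = (a, b) -> 0 < be ->
  (forall t, 0 <= t -> hdist (w t) (al, be * exp t) <= M) ->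
  forall s, snd (w s) = b * exp s.
Proof.
  intros Hg H0 Hbe Hnear s.
  assert (Hb : inH (a, b)) by (rewrite <- H0; apply Hg).
  assert (Hz : inH (w s)) by apply Hg.
  destruct (w s) as [xz yz] eqn:Ez. simpl.
  assert (Hdecay : yz * exp (- s) - b = 0).
  { eapply (eq_0_of_exp_decay _ _ (Rmax 0 s)). intros T HT.
    assert (HT0 : 0 <= T) by (eapply Rle_trans; [apply Rmax_l|exact HT]).
    assert (HwT : inH (w T)) by apply Hg.
    assert (Hv : inH (al, be * exp T))
      by (unfold inH; simpl; apply Rmult_lt_0_compat; [lra|apply exp_pos]).
    assert (Hs := hcosh_geodesic w T s Hg). assert (H0T := hcosh_geodesic w T 0 Hg).
    assert (Hnear' := hcosh_le _ _ _ HwT Hv (Hnear T HT0)).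
    assert (Hms := hcosh_mul _ _ HwT Hz). assert (Hm0 := hcosh_mul _ _ HwT Hb).
    assert (Hmv := hcosh_mul _ _ HwT Hv).
    rewrite Ez in Hs. rewrite H0, Rminus_0_r in H0T.
    unfold inH in HwT. destruct (w T) as [X Y]; simpl in *.
    rewrite Hs in Hms. rewrite H0T in Hm0.
    apply (vertical_offset_decay xz yz a b al be (cosh M) X Y T s); try assumption.
    - apply cosh_ge_1.
    - assert (2 * Y * (be * exp T) * hcosh (X, Y) (al, be * exp T)
              <= 2 * Y * (be * exp T) * cosh M).
      { apply Rmult_le_compat_l; [|exact Hnear']. unfold inH in Hv; simpl in Hv. nra. }
      lra. }
  rewrite exp_Ropp in Hdecay. assert (0 < exp s) by apply exp_pos.
  apply (f_equal (fun t => t * exp s)) in Hdecay. field_simplify in Hdecay; lra.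
Qed.

Lemma geodesic_vertical w a b al be M : is_geodesic w -> w 0 = (a, b) -> 0 < be ->
  (forall t, 0 <= t -> hdist (w t) (al, be * exp t) <= M) ->
  forall s, w s = (a, b * exp s).
Proof.
  intros Hg H0 Hbe Hnear s.
  assert (Hy := geodesic_vertical_height w a b al be M Hg H0 Hbe Hnear s).
  assert (Hb : inH (a, b)) by (rewrite <- H0; apply Hg).
  assert (Hz : inH (w s)) by apply Hg.
  assert (Hm := hcosh_mul _ _ Hz Hb). rewrite <- H0, hcosh_geodesic, Rminus_0_r in Hm by exact Hg.
  rewrite H0 in Hm. unfold inH in Hb; simpl in Hb.
  destruct (w s) as [x y]; simpl in *. subst y.
  assert (Hx : (x - a) ^ 2 = 0).
  { rewrite cosh_exp in Hm. assert (0 < exp s) by apply exp_pos.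
    replace ((x - a) ^ 2) with (2 * (b * exp s) * b * ((exp s + / exp s) / 2)
                                 - 2 * (b * exp s) * b - (b * exp s - b) ^ 2) by lra.
    field. lra. }
  apply sq_eq_0 in Hx. f_equal. lra.
Qed.

(** * The Busemann function of the unit semicircle *)

(* [scaled_exp_dist P e = snd (semicircle e) * exp (hdist P (semicircle e))], in a form
   that stays meaningful at [e = 0], where [semicircle 0] is the ideal point [1]. *)
Definition scaled_cosh_dist (P : pt) (e : R) : R :=
  snd (semicircle e)
  + ((fst P - fst (semicircle e)) ^ 2 + (snd P - snd (semicircle e)) ^ 2) / (2 * snd P).

Definition scaled_exp_dist (P : pt) (e : R) : R :=
  scaled_cosh_dist P e + sqrt (scaled_cosh_dist P e ^ 2 - snd (semicircle e) ^ 2).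

Lemma semicircle_0 : semicircle 0 = (1, 0).
Proof. unfold semicircle; f_equal; field. Qed.

Lemma scaled_cosh_dist_pos P e : inH P -> 0 <= e -> 0 < scaled_cosh_dist P e.
Proof.
  unfold inH, scaled_cosh_dist; intros HP He.
  destruct (Req_dec e 0) as [->|He0].
  - rewrite semicircle_0; simpl.
    assert (0 < ((fst P - 1) ^ 2 + (snd P - 0) ^ 2) / (2 * snd P)); [|lra].
    apply Rdiv_lt_0_compat; [|lra].
    assert (0 < (snd P - 0) ^ 2) by (apply pow_lt; lra). generalize (pow2_ge_0 (fst P - 1)); lra.
  - assert (Hy := semicircle_snd_pos e ltac:(lra)).
    assert (0 <= ((fst P - fst (semicircle e)) ^ 2 + (snd P - snd (semicircle e)) ^ 2)
                 / (2 * snd P)); [|lra].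
    apply Rdiv_le_0_compat; [|lra]. apply Rplus_le_le_0_compat; apply pow2_ge_0.
Qed.

Lemma hdist_semicircle P e : inH P -> 0 < e ->
  hdist P (semicircle e) = ln (scaled_exp_dist P e) - ln (snd (semicircle e)).
Proof.
  intros HP He. assert (Hy := semicircle_snd_pos e He).
  assert (Hh := scaled_cosh_dist_pos P e HP (Rlt_le _ _ He)).
  assert (Hcosh : hcosh P (semicircle e) = scaled_cosh_dist P e / snd (semicircle e)).
  { unfold hcosh, scaled_cosh_dist. unfold inH in HP. field. lra. }
  assert (H1 : 1 <= hcosh P (semicircle e)) by (apply hcosh_ge_1; [|apply Hy]; assumption).
  rewrite hdist_hcosh. unfold arcosh. rewrite Hcosh in *.
  unfold scaled_exp_dist. set (h := scaled_cosh_dist P e) in *. set (y := snd (semicircle e)) in *.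
  assert (Hhy : y <= h).
  { apply Rmult_le_reg_r with (/ y); [apply Rinv_0_lt_compat, Hy|].
    rewrite Rinv_r by lra. exact H1. }
  assert (Hsqrt : sqrt ((h / y) ^ 2 - 1) = sqrt (h ^ 2 - y ^ 2) / y).
  { replace ((h / y) ^ 2 - 1) with ((h ^ 2 - y ^ 2) / y ^ 2) by (field; lra).
    rewrite sqrt_div_alt, sqrt_pow2 by (try apply pow_lt; lra). reflexivity. }
  rewrite Hsqrt.
  replace (h / y + sqrt (h ^ 2 - y ^ 2) / y) with ((h + sqrt (h ^ 2 - y ^ 2)) / y) by (field; lra).
  assert (0 <= sqrt (h ^ 2 - y ^ 2)) by apply sqrt_pos.
  apply ln_div; lra.
Qed.

Lemma scaled_exp_dist_0 P : inH P -> scaled_exp_dist P 0 = ((fst P - 1) ^ 2 + snd P ^ 2) / snd P.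
Proof.
  intro HP. assert (Hh := scaled_cosh_dist_pos P 0 HP (Rle_refl _)).
  unfold scaled_exp_dist. rewrite semicircle_0 in *; simpl snd.
  replace (scaled_cosh_dist P 0 ^ 2 - 0 ^ 2) with (scaled_cosh_dist P 0 ^ 2) by ring.
  rewrite sqrt_pow2 by lra. unfold scaled_cosh_dist. rewrite semicircle_0; simpl.
  unfold inH in HP. field. lra.
Qed.

Lemma scaled_exp_dist_continuous P : inH P -> continuous (fun e => ln (scaled_exp_dist P e)) 0.
Proof.
  intro HP. apply (@ex_derive_continuous R_AbsRing R_NormedModule).
  assert (Hh := scaled_cosh_dist_pos P 0 HP (Rle_refl _)).
  assert (Hg : 0 < scaled_exp_dist P 0).
  { unfold scaled_exp_dist. assert (0 <= sqrt (scaled_cosh_dist P 0 ^ 2 - snd (semicircle 0) ^ 2))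
      by apply sqrt_pos. lra. }
  assert (Dh : ex_derive (scaled_cosh_dist P) 0).
  { unfold inH in HP. unfold scaled_cosh_dist, semicircle; simpl. auto_derive.
    repeat split; simpl; lra. }
  set (Wy := fun e => snd (semicircle e)).
  assert (DW : ex_derive Wy 0) by (unfold Wy, semicircle; simpl; auto_derive; simpl; lra).
  assert (HW0 : Wy 0 = 0) by (unfold Wy; rewrite semicircle_0; reflexivity).
  unfold scaled_exp_dist in *. fold (Wy 0) in Hg. change (fun e => snd (semicircle e)) with Wy.
  apply (ex_derive_ext
    (fun e => ln (scaled_cosh_dist P e + sqrt (scaled_cosh_dist P e ^ 2 - Wy e ^ 2))));
    [reflexivity|].
  auto_derive. repeat split; auto; rewrite HW0 in *; try lra; nra.
Qed.

(* [((x - 1) ^ 2 + y ^ 2) / y] is the exponential of a horofunction centred at [1]. *)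
Lemma busemann_semicircle c t0 A B : inH A -> inH B ->
  (forall t, c t = semicircle (exp (- (t - t0)))) ->
  busemann c A B = ln (((fst A - 1) ^ 2 + snd A ^ 2) / snd A)
                   - ln (((fst B - 1) ^ 2 + snd B ^ 2) / snd B).
Proof.
  intros HA HB Hc. unfold busemann. rewrite <- !scaled_exp_dist_0 by assumption.
  rewrite (is_lim_unique _ _ (ln (scaled_exp_dist A 0) - ln (scaled_exp_dist B 0)));
    [reflexivity|].
  apply (is_lim_ext (fun t => ln (scaled_exp_dist A (exp (- (t - t0))))
                              - ln (scaled_exp_dist B (exp (- (t - t0)))))).
  { intro t. rewrite Hc, !hdist_semicircle by (try apply exp_pos; assumption). ring. }
  assert (Hlim : is_lim (fun t => exp (- (t - t0))) p_infty 0).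
  { apply (is_lim_ext (fun t => exp (-1 * t + t0))); [intro; f_equal; ring|].
    apply (is_lim_comp_lin (fun y => exp y) (-1) t0 p_infty 0); [|lra].
    replace (Rbar_plus (Rbar_mult (-1) p_infty) t0) with m_infty; [apply is_lim_exp_m|].
    simpl. destruct (Rle_dec 0 (-1)); [exfalso; lra|reflexivity]. }
  apply (is_lim_minus _ _ _ (ln (scaled_exp_dist A 0)) (ln (scaled_exp_dist B 0))).
  - apply (filterlim_comp R R R (fun t => exp (- (t - t0))) (fun e => ln (scaled_exp_dist A e))
             (Rbar_locally' p_infty) (locally 0));
      [exact Hlim|apply scaled_exp_dist_continuous, HA].
  - apply (filterlim_comp R R R (fun t => exp (- (t - t0))) (fun e => ln (scaled_exp_dist B e))
             (Rbar_locally' p_infty) (locally 0));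
      [exact Hlim|apply scaled_exp_dist_continuous, HB].
  - reflexivity.
Qed.

(** * Distance estimates in the normalized picture *)

Lemma hdist_vertical_scale a h lam P : 0 < h -> 1 <= lam -> inH P ->
  hdist (a, lam * h) P <= hdist (a, h) P + ln lam.
Proof.
  intros Hh Hl HP. destruct P as [x y]. unfold inH in HP; simpl in HP.
  assert (Hq1 : 1 <= hcosh (a, h) (x, y)) by (apply hcosh_ge_1; unfold inH; simpl; lra).
  set (q := hcosh (a, h) (x, y)) in *.
  assert (Hs0 : 0 <= q ^ 2 - 1) by nra.
  assert (Hss := pow2_sqrt _ Hs0). assert (Hsp := sqrt_pos (q ^ 2 - 1)).
  set (s := sqrt (q ^ 2 - 1)) in *.
  assert (Hd : hdist (a, h) (x, y) = ln (q + s)) by reflexivity.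
  assert (Hln : 0 <= ln lam) by (rewrite <- ln_1; apply ln_le; lra).
  assert (Hlnq : 0 <= ln (q + s)) by (rewrite <- ln_1; apply ln_le; lra).
  apply hdist_le; unfold inH; simpl; try nra. rewrite Hd.
  rewrite cosh_exp, exp_plus, !exp_ln by lra.
  assert (Hq : q = (((x - a) ^ 2 + y ^ 2) + h ^ 2) / (2 * h * y))
    by (unfold q, hcosh; simpl; field; lra).
  set (t := h / y).
  assert (Hts : t <= q + s).
  { assert (Ht : (t - q) ^ 2 <= s ^ 2).
    { rewrite Hss.
      assert (E : (t - q) ^ 2 - (q ^ 2 - 1) = - ((x - a) ^ 2 / y ^ 2))
        by (unfold t; rewrite Hq; field; lra).
      assert (0 <= (x - a) ^ 2 / y ^ 2) by (apply Rdiv_le_0_compat; [apply pow2_ge_0|nra]).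
      lra. }
    destruct (Rle_or_lt t q); [lra|].
    apply abs_le_of_sq in Ht; [|lra]. rewrite Rabs_right in Ht by lra. lra. }
  assert (Hcosh : hcosh (a, lam * h) (x, y) = q / lam + (lam - / lam) * t / 2)
    by (unfold hcosh; simpl; rewrite Hq; unfold t; field; lra).
  assert (Hinv : / ((q + s) * lam) = (q - s) / lam).
  { assert ((q + s) * (q - s) = 1) by nra. field_simplify_eq; lra. }
  rewrite Hcosh, Hinv.
  assert (/ lam <= 1) by (rewrite <- Rinv_1; apply Rinv_le_contravar; lra).
  assert ((lam - / lam) * t <= (lam - / lam) * (q + s)) by (apply Rmult_le_compat_l; lra).
  assert (Hsum : ((q + s) * lam + (q - s) / lam) / 2 = q / lam + (lam - / lam) * (q + s) / 2)
    by (field; lra).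
  rewrite Hsum. lra.
Qed.

Definition transl (l : R) (z : pt) : pt := (fst z + l, snd z).

(* [z |-> -1 / (z - (1 + l))] sends [1 + l], the endpoint of the translated
   semicircle, to infinity. *)
Definition flip (l : R) : mob := Mob 0 (-1) 1 (- (1 + l)).

Definition flip_den (e0 l : R) : R := 4 * e0 ^ 2 * (1 + l) + l ^ 2 * (1 + e0 ^ 2).
Definition flip_x (e0 l : R) : R := (2 * e0 ^ 2 + l * (1 + e0 ^ 2)) / flip_den e0 l.
Definition flip_y (e0 l : R) : R := 2 * e0 / flip_den e0 l.

Lemma flip_den_pos e0 l : 0 < e0 -> 0 < l -> 0 < flip_den e0 l.
Proof. intros. unfold flip_den. assert (0 < e0 ^ 2) by (apply pow_lt; auto). nra. Qed.

Lemma flip_den_ge e0 l : 0 < e0 -> 0 < l -> 4 * e0 ^ 2 <= flip_den e0 l.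
Proof.
  intros He Hl. unfold flip_den. assert (0 < e0 ^ 2) by (apply pow_lt; auto).
  assert (0 <= l ^ 2 * (1 + e0 ^ 2)) by (apply Rmult_le_pos; nra). nra.
Qed.

Lemma mdet_flip l : mdet (flip l) = 1.
Proof. unfold mdet, flip; simpl; ring. Qed.

Lemma flip_semicircle e0 l : 0 < e0 -> 0 < l ->
  mob_act (flip l) (semicircle e0) = (flip_x e0 l, flip_y e0 l).
Proof.
  intros He Hl. assert (HN := flip_den_pos e0 l He Hl).
  assert (0 < 1 + e0 ^ 2) by (generalize (pow2_ge_0 e0); lra).
  unfold mob_act, flip, semicircle, flip_x, flip_y; cbn [fst snd ma mb mc md].
  assert (Hden : (1 * ((1 - e0 ^ 2) / (1 + e0 ^ 2)) + - (1 + l)) ^ 2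
                 + (1 * (2 * e0 / (1 + e0 ^ 2))) ^ 2 = flip_den e0 l / (1 + e0 ^ 2))
    by (unfold flip_den; field; lra).
  rewrite Hden. unfold flip_den in *. f_equal; field; lra.
Qed.

Lemma flip_transl_semicircle e l : 0 < e -> 0 < l ->
  mob_act (flip l) (transl l (semicircle e)) = (1 / 2, / (2 * e)).
Proof.
  intros He Hl. assert (0 < 1 + e ^ 2) by (generalize (pow2_ge_0 e); lra).
  unfold mob_act, flip, semicircle, transl; cbn [fst snd ma mb mc md].
  assert (Hden : (1 * ((1 - e ^ 2) / (1 + e ^ 2) + l) + - (1 + l)) ^ 2
                 + (1 * (2 * e / (1 + e ^ 2))) ^ 2 = 4 * e ^ 2 / (1 + e ^ 2))
    by (field; lra).
  rewrite Hden. assert (0 < e ^ 2) by (apply pow_lt; auto). f_equal; field; lra.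
Qed.

Lemma busemann_transl_semicircle e0 l : 1 <= e0 -> 0 < l ->
  ln (((fst (transl (- l) (semicircle e0)) - 1) ^ 2 + snd (transl (- l) (semicircle e0)) ^ 2)
      / snd (transl (- l) (semicircle e0)))
  - ln (((fst (semicircle e0) - 1) ^ 2 + snd (semicircle e0) ^ 2) / snd (semicircle e0))
  = ln (flip_den e0 l / (4 * e0 ^ 2)).
Proof.
  intros He Hl. assert (0 < 1 + e0 ^ 2) by (generalize (pow2_ge_0 e0); lra).
  assert (0 < e0 ^ 2) by (apply pow_lt; lra).
  assert (Hy : 0 < 2 * e0 / (1 + e0 ^ 2)) by (apply Rdiv_lt_0_compat; lra).
  assert (0 < (2 * e0 / (1 + e0 ^ 2)) ^ 2) by (apply pow_lt; auto).
  unfold transl, semicircle; simpl. rewrite <- ln_div.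
  - f_equal. unfold flip_den. field. repeat split; try lra.
    assert (0 < (2 * e0) ^ 2) by (apply pow_lt; lra).
    generalize (pow2_ge_0 (1 - e0 ^ 2 - (1 + e0 ^ 2))). simpl in *. lra.
  - apply Rdiv_lt_0_compat; [|exact Hy].
    generalize (pow2_ge_0 ((1 - e0 ^ 2) / (1 + e0 ^ 2) + - l - 1)). simpl in *. lra.
  - apply Rdiv_lt_0_compat; [|exact Hy].
    generalize (pow2_ge_0 ((1 - e0 ^ 2) / (1 + e0 ^ 2) - 1)). simpl in *. lra.
Qed.

Lemma flip_x_sq_dist e0 E l : 0 < e0 -> 0 < E -> 0 < l ->
  (flip_x e0 l - flip_x (e0 / E) l) ^ 2 + (flip_y e0 l * E - flip_y (e0 / E) l) ^ 2 =
  2 * (flip_y e0 l * E) * flip_y (e0 / E) l * (2 * l ^ 2 / flip_den e0 l) * ((E - / E) / 2) ^ 2.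
Proof.
  intros He HE Hl. assert (HN := flip_den_pos e0 l He Hl).
  assert (HN' := flip_den_pos (e0 / E) l ltac:(apply Rdiv_lt_0_compat; auto) Hl).
  unfold flip_x, flip_y. unfold flip_den in *.
  assert (0 < e0 ^ 2) by (apply pow_lt; lra). assert (0 < E ^ 2) by (apply pow_lt; lra).
  assert (0 < l ^ 2) by (apply pow_lt; lra).
  field. repeat split; try lra. nra.
Qed.

Lemma hdist_flip_semicircle_le e0 E l : 1 <= e0 -> 1 <= E -> E <= 3 * e0 -> 0 < l ->
  hdist (flip_x e0 l, flip_y e0 l * E) (mob_act (flip l) (semicircle (e0 / E))) <= 3 * l.
Proof.
  intros He HE HE3 Hl.
  assert (He' : 0 < e0 / E) by (apply Rdiv_lt_0_compat; lra).
  assert (HN := flip_den_pos e0 l ltac:(lra) Hl). assert (HN' := flip_den_pos (e0 / E) l He' Hl).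
  assert (Hy : 0 < flip_y e0 l) by (apply Rdiv_lt_0_compat; lra).
  assert (Hy' : 0 < flip_y (e0 / E) l) by (apply Rdiv_lt_0_compat; lra).
  assert (He2 : 0 < e0 ^ 2) by (apply pow_lt; lra).
  rewrite flip_semicircle by assumption.
  apply hdist_le_of_sq; unfold inH; cbn [fst snd]; try nra.
  rewrite flip_x_sq_dist by lra.
  set (K := 2 * l ^ 2 / flip_den e0 l).
  assert (HK0 : 0 <= K) by (apply Rdiv_le_0_compat; nra).
  assert (HK : K * (2 * e0 ^ 2) <= l ^ 2).
  { unfold K. assert (HNge := flip_den_ge e0 l ltac:(lra) Hl).
    apply Rmult_le_reg_r with (flip_den e0 l); [lra|].
    replace (2 * l ^ 2 / flip_den e0 l * (2 * e0 ^ 2) * flip_den e0 l)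
      with (4 * l ^ 2 * e0 ^ 2) by (field; lra).
    assert (0 <= l ^ 2) by apply pow2_ge_0. nra. }
  assert (HS : ((E - / E) / 2) ^ 2 <= E ^ 2 / 4).
  { assert (0 < / E <= 1)
      by (split; [apply Rinv_0_lt_compat; lra| rewrite <- Rinv_1; apply Rinv_le_contravar; lra]).
    nra. }
  assert (HKS : 2 * K * ((E - / E) / 2) ^ 2 <= (3 * l) ^ 2 / 4).
  { assert (0 <= ((E - / E) / 2) ^ 2) by apply pow2_ge_0.
    assert (E ^ 2 <= 9 * e0 ^ 2) by nra. nra. }
  assert (Hyy : 0 < flip_y e0 l * E * flip_y (e0 / E) l) by (apply Rmult_lt_0_compat; nra).
  replace (2 * (flip_y e0 l * E) * flip_y (e0 / E) l * K * ((E - / E) / 2) ^ 2)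
    with (flip_y e0 l * E * flip_y (e0 / E) l * (2 * K * ((E - / E) / 2) ^ 2)) by ring.
  replace (flip_y e0 l * E * flip_y (e0 / E) l * (3 * l) ^ 2 / 4)
    with (flip_y e0 l * E * flip_y (e0 / E) l * ((3 * l) ^ 2 / 4)) by field.
  apply Rmult_le_compat_l; lra.
Qed.

Lemma hdist_flip_transl_le e0 E l : 1 <= e0 -> e0 <= E -> 0 < l ->
  hdist (flip_x e0 l, / (2 * e0) * E) (1 / 2, / (2 * e0) * E) <= 2 * l.
Proof.
  intros He HE Hl.
  assert (HN := flip_den_pos e0 l ltac:(lra) Hl).
  assert (He2 : 1 <= e0 ^ 2) by nra.
  assert (Hh : 1 / 2 <= / (2 * e0) * E).
  { replace (/ (2 * e0) * E) with (E / (2 * e0)) by (field; lra).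
    apply Rmult_le_reg_r with (2 * e0); [lra|]. field_simplify; lra. }
  assert (Hx : 1 / 2 - flip_x e0 l
               = (2 * l * (e0 ^ 2 - 1) + l ^ 2 * (1 + e0 ^ 2)) / (2 * flip_den e0 l))
    by (unfold flip_x, flip_den in *; field; lra).
  assert (Hx0 : 0 <= 1 / 2 - flip_x e0 l) by (rewrite Hx; apply Rdiv_le_0_compat; nra).
  assert (Hxl : 1 / 2 - flip_x e0 l <= l / 2).
  { rewrite Hx. apply Rmult_le_reg_r with (2 * flip_den e0 l); [lra|].
    replace ((2 * l * (e0 ^ 2 - 1) + l ^ 2 * (1 + e0 ^ 2)) / (2 * flip_den e0 l)
             * (2 * flip_den e0 l))
      with (2 * l * (e0 ^ 2 - 1) + l ^ 2 * (1 + e0 ^ 2)) by (field; lra).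
    unfold flip_den. nra. }
  apply hdist_le_of_sq; unfold inH; cbn [fst snd]; try lra.
  set (h := / (2 * e0) * E) in *. clearbody h.
  replace ((h - h) ^ 2) with 0 by ring.
  assert ((flip_x e0 l - 1 / 2) ^ 2 <= (l / 2) ^ 2) by nra.
  assert (Hhh : 1 / 4 <= h * h) by nra.
  assert (0 <= l ^ 2) by apply pow2_ge_0.
  replace (h * h * (2 * l) ^ 2 / 4) with (h * h * l ^ 2) by field.
  replace ((l / 2) ^ 2) with (1 / 4 * l ^ 2) in * by field.
  assert (1 / 4 * l ^ 2 <= h * h * l ^ 2) by (apply Rmult_le_compat_r; lra).
  lra.
Qed.

Lemma flip_ratio_bounds e0 l : 1 <= e0 -> 0 < l ->
  0 <= ln (flip_den e0 l / (4 * e0 ^ 2)) <= 2 * l.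
Proof.
  intros He Hl. assert (He2 : 0 < e0 ^ 2) by (apply pow_lt; lra).
  assert (HN := flip_den_ge e0 l ltac:(lra) Hl).
  assert (H1 : 1 <= flip_den e0 l / (4 * e0 ^ 2)).
  { apply Rmult_le_reg_r with (4 * e0 ^ 2); [lra|]. field_simplify; lra. }
  split; [rewrite <- ln_1; apply ln_le; lra|].
  rewrite <- (ln_exp (2 * l)). apply ln_le; [lra|].
  assert (flip_den e0 l / (4 * e0 ^ 2) <= (1 + l) ^ 2).
  { apply Rmult_le_reg_r with (4 * e0 ^ 2); [lra|].
    replace (flip_den e0 l / (4 * e0 ^ 2) * (4 * e0 ^ 2)) with (flip_den e0 l) by (field; lra).
    unfold flip_den. assert (1 <= e0 ^ 2) by nra. assert (0 <= l ^ 2) by apply pow2_ge_0. nra. }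
  replace (2 * l) with (l + l) by ring. rewrite exp_plus.
  assert (H2 := exp_ineq1_le l). nra.
Qed.

Section Normalized.

Variables (l t0 : R) (u v : R -> pt).
Hypotheses (Hl : 0 < l) (Ht0 : 0 <= t0) (Hgu : is_geodesic u) (Hut0 : u t0 = (0, 1))
  (Hdx : is_derive (fun r => fst (u r)) t0 1) (Hdy : is_derive (fun r => snd (u r)) t0 0)
  (Hgv : is_geodesic v) (Hv0 : v 0 = u 0)
  (Hasym : same_fwd_endpoint v (fun t => transl l (u t))).

Let tau := ln (flip_den (exp t0) l / (4 * exp t0 ^ 2)).

Lemma normalized_u s : u s = semicircle (exp t0 / exp s).
Proof.
  replace s with (t0 + (s - t0)) at 1 by ring.
  rewrite (geodesic_semicircle u t0 Hgu Hut0 Hdx Hdy). f_equal.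
  replace (- (s - t0)) with (t0 + - s) by ring. rewrite exp_plus, exp_Ropp. reflexivity.
Qed.

Lemma normalized_u0 : u 0 = semicircle (exp t0).
Proof. rewrite normalized_u, exp_0. f_equal. field. Qed.

Lemma normalized_winding_time : busemann u (transl (- l) (u 0)) (u 0) = tau.
Proof.
  assert (Hin : forall z, inH z -> inH (transl (- l) z)) by (intros z Hz; exact Hz).
  rewrite (busemann_semicircle u t0), normalized_u0 by
    (try apply Hin; try apply Hgu; intro t; rewrite normalized_u; f_equal;
     replace (- (t - t0)) with (t0 + - t) by ring; rewrite exp_plus, exp_Ropp; reflexivity).
  apply busemann_transl_semicircle; [apply exp_ge_1|]; assumption.
Qed.

Lemma flip_winding s : mob_act (flip l) (v s) = (flip_x (exp t0) l, flip_y (exp t0) l * exp s).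
Proof.
  destruct Hasym as [M HM].
  assert (He0 : 0 < exp t0) by apply exp_pos.
  assert (Hflip : 0 < mdet (flip l)) by (rewrite mdet_flip; lra).
  assert (Hflip_u : forall s, mob_act (flip l) (transl l (u s)) = (1 / 2, / (2 * exp t0) * exp s)).
  { intro r. rewrite normalized_u, flip_transl_semicircle by
      (try apply Rdiv_lt_0_compat; try apply exp_pos; assumption).
    f_equal. field. split; apply Rgt_not_eq, exp_pos. }
  apply (geodesic_vertical (fun s => mob_act (flip l) (v s)) _ _ (1 / 2) (/ (2 * exp t0)) M).
  - split; [intro; apply mob_act_inH, Hgv; assumption|].
    intros; rewrite hdist_mob_act by (try apply Hgv; assumption). apply Hgv.
  - simpl. rewrite Hv0, normalized_u0. apply flip_semicircle; assumption.
  - apply Rinv_0_lt_compat; lra.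
  - intros r Hr. rewrite <- Hflip_u, hdist_mob_act by (try apply Hgv; try apply Hgu; assumption).
    apply HM, Hr.
Qed.

Lemma normalized_late T : t0 <= T -> hdist (v (T + tau)) (transl l (u T)) <= 2 * l.
Proof.
  intro HT. assert (He0 := exp_ge_1 t0 Ht0).
  assert (Hflip : 0 < mdet (flip l)) by (rewrite mdet_flip; lra).
  rewrite <- (hdist_mob_act (flip l)) by (try apply Hgv; try apply Hgu; assumption).
  rewrite flip_winding, normalized_u, flip_transl_semicircle
    by (try apply Rdiv_lt_0_compat; try apply exp_pos; lra).
  replace (flip_y (exp t0) l * exp (T + tau)) with (/ (2 * exp t0) * exp T).
  - replace (/ (2 * (exp t0 / exp T))) with (/ (2 * exp t0) * exp T)
      by (field; split; apply Rgt_not_eq; [apply exp_pos|lra]).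
    apply hdist_flip_transl_le; [| apply exp_le_compat |]; assumption.
  - assert (HN := flip_den_pos (exp t0) l ltac:(lra) Hl).
    unfold tau. rewrite exp_plus, exp_ln by (apply Rdiv_lt_0_compat; nra).
    unfold flip_y. field. split; lra.
Qed.

Lemma normalized_early T : 0 <= T <= t0 + 1 -> hdist (v (T + tau)) (u T) <= tau + 3 * l.
Proof.
  intro HT. assert (He0 := exp_ge_1 t0 Ht0).
  assert (Hflip : 0 < mdet (flip l)) by (rewrite mdet_flip; lra).
  assert (HN := flip_den_pos (exp t0) l ltac:(lra) Hl).
  rewrite <- (hdist_mob_act (flip l)) by (try apply Hgv; try apply Hgu; assumption).
  rewrite flip_winding, exp_plus.
  replace (flip_y (exp t0) l * (exp T * exp tau)) with (exp tau * (flip_y (exp t0) l * exp T))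
    by ring.
  eapply Rle_trans; [apply hdist_vertical_scale|].
  - apply Rmult_lt_0_compat; [apply Rdiv_lt_0_compat; lra|apply exp_pos].
  - apply exp_ge_1, (flip_ratio_bounds (exp t0) l He0 Hl).
  - apply mob_act_inH, Hgu; assumption.
  - rewrite ln_exp, normalized_u, Rplus_comm. apply Rplus_le_compat_l.
    apply hdist_flip_semicircle_le; try assumption; [apply exp_ge_1; lra|].
    assert (exp T <= exp t0 * exp 1) by (rewrite <- exp_plus; apply exp_le_compat; lra).
    assert (exp 1 <= 3) by apply exp_le_3. nra.
Qed.

(* Before [t0] the winding shadows [u]; after [t0] it shadows [p u]. *)
Lemma normalized_winding_bound t : 0 <= t ->
  Rmin (dist_d1 (gflow (t + busemann u (transl (- l) (u 0)) (u 0)) v) (gflow t u))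
       (dist_d1 (gflow (t + busemann u (transl (- l) (u 0)) (u 0)) v)
                (fun s => transl l (gflow t u s))) <= 12 * l.
Proof.
  intro Ht. rewrite normalized_winding_time.
  assert (Htau := flip_ratio_bounds (exp t0) l (exp_ge_1 t0 Ht0) Hl). fold tau in Htau.
  unfold dist_d1, gflow.
  replace (0 + (t + tau)) with (t + tau) by ring. replace (0 + t) with t by ring.
  replace (1 + (t + tau)) with ((1 + t) + tau) by ring.
  destruct (Rle_or_lt t0 t) as [Hlate|Hearly].
  - eapply Rle_trans; [apply Rmin_r|].
    assert (hdist (v (t + tau)) (transl l (u t)) <= 2 * l) by (apply normalized_late; lra).
    assert (hdist (v (1 + t + tau)) (transl l (u (1 + t))) <= 2 * l)
      by (apply normalized_late; lra).
    lra.
  - eapply Rle_trans; [apply Rmin_l|].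
    assert (hdist (v (t + tau)) (u t) <= tau + 3 * l) by (apply normalized_early; lra).
    assert (hdist (v (1 + t + tau)) (u (1 + t)) <= tau + 3 * l)
      by (apply normalized_early; lra).
    lra.
Qed.

End Normalized.

(** * Normalizing the horocycle and the parabolic isometry *)

Definition isometry (F : pt -> pt) : Prop :=
  (forall z, inH z -> inH (F z)) /\
  (forall z w, inH z -> inH w -> hdist (F z) (F w) = hdist z w).

Definition mob_dx (m : mob) (z : pt) (a b : R) : R :=
  let p := mc m * fst z + md m in let q := mc m * snd z in
  mdet m * (a * (p ^ 2 - q ^ 2) + 2 * p * q * b) / (p ^ 2 + q ^ 2) ^ 2.

Definition mob_dy (m : mob) (z : pt) (a b : R) : R :=
  let p := mc m * fst z + md m in let q := mc m * snd z in
  mdet m * (b * (p ^ 2 - q ^ 2) - 2 * p * q * a) / (p ^ 2 + q ^ 2) ^ 2.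

Lemma mob_act_derive m f t a b : 0 < mdet m -> inH (f t) ->
  is_derive (fun r => fst (f r)) t a -> is_derive (fun r => snd (f r)) t b ->
  is_derive (fun r => fst (mob_act m (f r))) t (mob_dx m (f t) a b) /\
  is_derive (fun r => snd (mob_act m (f r))) t (mob_dy m (f t) a b).
Proof.
  intros Hm Hf Ha Hb. assert (Hden := mob_den_pos m (f t) ltac:(lra) Hf). unfold mob_den in Hden.
  set (X := fun r => fst (f r)) in *. set (Y := fun r => snd (f r)) in *.
  assert (Ef : forall r, f r = (X r, Y r)) by (intro; unfold X, Y; destruct (f r); reflexivity).
  assert (DX : Derive (fun x => X x) t = a) by (apply is_derive_unique, Ha).
  assert (DY : Derive (fun x => Y x) t = b) by (apply is_derive_unique, Hb).
  unfold mob_dx, mob_dy, mdet. rewrite (Ef t). cbn [fst snd].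
  change (fst (f t)) with (X t) in Hden. change (snd (f t)) with (Y t) in Hden.
  destruct m as [ma' mb' mc' md']. cbn [ma mb mc md] in *.
  split.
  - apply (is_derive_ext (fun r => ((ma' * X r + mb') * (mc' * X r + md') + ma' * mc' * Y r ^ 2)
                                   / ((mc' * X r + md') ^ 2 + (mc' * Y r) ^ 2))).
    { intro r. rewrite (Ef r). reflexivity. }
    auto_derive; [repeat split; try (eexists; eassumption); lra|].
    rewrite DX, DY. field. lra.
  - apply (is_derive_ext (fun r => (ma' * md' - mb' * mc') * Y r
                                   / ((mc' * X r + md') ^ 2 + (mc' * Y r) ^ 2))).
    { intro r. rewrite (Ef r). reflexivity. }
    auto_derive; [repeat split; try (eexists; eassumption); lra|].
    rewrite DX, DY. field. lra.
Qed.

Lemma mob_d_norm m z a b : 0 < mdet m -> inH z -> a ^ 2 + b ^ 2 = snd z ^ 2 ->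
  mob_dx m z a b ^ 2 + mob_dy m z a b ^ 2 = snd (mob_act m z) ^ 2.
Proof.
  intros Hm Hz Hab. assert (Hden := mob_den_pos m z ltac:(lra) Hz). unfold mob_den in Hden.
  rewrite mob_actE. unfold mob_dx, mob_dy, mob_den. cbn [fst snd].
  set (p := mc m * fst z + md m) in *. set (q := mc m * snd z) in *.
  transitivity (mdet m ^ 2 * (a ^ 2 + b ^ 2) / (p ^ 2 + q ^ 2) ^ 2); [field; lra|].
  rewrite Hab. field. lra.
Qed.

Definition aff (sg k c : R) (z : pt) : pt := (sg * (fst z - k) / c, snd z / c).

Lemma hdist_aff sg k c z w : sg ^ 2 = 1 -> 0 < c -> inH z -> inH w ->
  hdist (aff sg k c z) (aff sg k c w) = hdist z w.
Proof.
  intros Hs Hc Hz Hw. rewrite !hdist_hcosh. f_equal.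
  destruct z as [x y]; destruct w as [x' y']; unfold hcosh, aff, inH in *; cbn [fst snd] in *.
  transitivity (1 + (sg ^ 2 * (x - x') ^ 2 + (y - y') ^ 2) / (2 * y * y')); [field; lra|].
  rewrite Hs. f_equal. f_equal. ring.
Qed.

Lemma mob_act_fix_horizontal m c : mdet m = 1 -> 0 < c ->
  (forall x, snd (mob_act m (x, c)) = c) ->
  forall z, mob_act m z = (fst z + mb m * md m, snd z).
Proof.
  intros Hdet Hc Hline z.
  assert (Hden1 : forall x, (mc m * x + md m) ^ 2 + (mc m * c) ^ 2 = 1).
  { intro x. specialize (Hline x). rewrite mob_actE, Hdet in Hline. cbn [fst snd] in Hline.
    assert (Hpos := mob_den_pos m (x, c) ltac:(lra) Hc). unfold mob_den in *; cbn [fst snd] in *.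
    apply (f_equal (fun t => t * ((mc m * x + md m) ^ 2 + (mc m * c) ^ 2) / c)) in Hline.
    field_simplify in Hline; lra. }
  assert (Hc0 : mc m = 0).
  { assert (H0 := Hden1 0). assert (H1 := Hden1 1). assert (H2 := Hden1 (-1)).
    apply sq_eq_0. nra. }
  assert (Hdd : md m * md m = 1) by (assert (H0 := Hden1 0); rewrite Hc0 in H0; simpl in H0; lra).
  unfold mdet in Hdet. rewrite Hc0, Rmult_0_r, Rminus_0_r in Hdet.
  assert (Ha : ma m = md m).
  { transitivity (ma m * (md m * md m)); [rewrite Hdd; ring|].
    transitivity ((ma m * md m) * md m); [ring|]. rewrite Hdet; ring. }
  rewrite mob_actE. unfold mob_den, mdet. rewrite Hc0, Ha. destruct z as [x y]; cbn [fst snd].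
  replace ((0 * x + md m) ^ 2 + (0 * y) ^ 2) with 1 by (simpl; lra).
  f_equal.
  - transitivity ((md m * md m) * x + mb m * md m); [field|]. rewrite Hdd. ring.
  - transitivity ((md m * md m) * y); [field|]. rewrite Hdd. ring.
Qed.

Lemma horocycle_to_horizontal S : is_horocycle S -> exists G c, mdet G = 1 /\ 0 < c /\
  (forall z, S z -> inH z /\ snd (mob_act G z) = c) /\
  (forall w, inH w -> snd w = c -> S (mob_act (mob_inv G) w)).
Proof.
  intros [[c [Hc HS]] | [x0 [r [Hr HS]]]].
  - exists (Mob 1 0 0 1), c. split; [unfold mdet; simpl; ring|]. split; [exact Hc|]. split.
    + intros z Hz. apply HS in Hz. unfold inH. split; [lra|].
      destruct z as [x y]; unfold mob_act; cbn [fst snd ma mb mc md] in *. field_simplify; auto.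
    + intros w Hw Hwc. apply HS.
      destruct w as [x y]; unfold mob_inv, mob_act; cbn [fst snd ma mb mc md] in *.
      rewrite <- Hwc. field.
  - exists (Mob 0 (-1) 1 (- x0)), (/ (2 * r)). split; [unfold mdet; simpl; ring|].
    split; [apply Rinv_0_lt_compat; lra|]. split.
    + intros z Hz. apply HS in Hz. destruct Hz as [Hcirc Hy]. unfold inH. split; [exact Hy|].
      destruct z as [x y]; unfold mob_act; cbn [fst snd ma mb mc md] in *.
      replace ((1 * x + - x0) ^ 2 + (1 * y) ^ 2) with (2 * r * y) by (simpl in *; nra).
      field. lra.
    + intros w Hw Hwc. apply HS.
      destruct w as [x y]; unfold inH, mob_inv, mob_act in *; cbn [fst snd ma mb mc md] in *.
      assert (Hy2 : 0 < y ^ 2) by (apply pow_lt; auto).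
      assert (Hden : 0 < x ^ 2 + y ^ 2) by (generalize (pow2_ge_0 x); lra).
      replace ((- - (1) * x + 0) ^ 2 + (- - (1) * y) ^ 2) with (x ^ 2 + y ^ 2) by ring.
      assert (Hry : 2 * r * y = 1) by (rewrite Hwc; field; lra).
      split.
      * transitivity ((x ^ 2 + y ^ 2) / (x ^ 2 + y ^ 2) ^ 2 - 2 * r * y / (x ^ 2 + y ^ 2) + r ^ 2);
          [field; lra|].
        rewrite Hry. field. lra.
      * apply Rdiv_lt_0_compat; [ring_simplify; lra|]. ring_simplify. lra.
Qed.

Lemma ex_derive_continuity (f : R -> R) : (forall s, ex_derive f s) -> continuity f.
Proof.
  intros Hf x. apply continuity_pt_filterlim.
  apply (@ex_derive_continuous R_AbsRing R_NormedModule), Hf.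
Qed.

Lemma is_derive_pos_increase (f : R -> R) s0 d l : is_derive f s0 d -> 0 < d -> 0 < l ->
  exists e, 0 < e < l /\ f s0 < f (s0 + e).
Proof.
  intros Hd Hpos Hl. apply is_derive_Reals in Hd.
  destruct (Hd (d / 2) ltac:(lra)) as [[del Hdel] Hlim]; simpl in Hlim.
  set (e := Rmin (del / 2) (l / 2)).
  assert (He : 0 < e) by (apply Rmin_pos; lra).
  assert (He2 : e <= l / 2) by apply Rmin_r. assert (He3 : e <= del / 2) by apply Rmin_l.
  exists e. split; [lra|].
  specialize (Hlim e ltac:(lra) ltac:(rewrite Rabs_right; lra)).
  apply Rabs_def2 in Hlim. destruct Hlim as [_ Hlim].
  assert (0 < (f (s0 + e) - f s0) / e) by lra.
  assert (0 < f (s0 + e) - f s0); [|lra].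
  replace (f (s0 + e) - f s0) with ((f (s0 + e) - f s0) / e * e) by (field; lra).
  apply Rmult_lt_0_compat; lra.
Qed.

(* The intermediate value theorem on [[s0 + e, s0 + l]]. *)
Lemma not_injective_of_decrease (f : R -> R) s0 d l : (forall s, ex_derive f s) ->
  is_derive f s0 d -> 0 < d -> 0 < l -> f (s0 + l) < f s0 ->
  exists s, s <> s0 /\ f s = f s0.
Proof.
  intros Hf Hd Hpos Hl Hdec.
  destruct (is_derive_pos_increase f s0 d l Hd Hpos Hl) as [e [He Hinc]].
  destruct (IVT (fun s => f s0 - f s) (s0 + e) (s0 + l)) as [z [Hz Hz0]]; [| lra .. |].
  - intro x. apply continuity_pt_minus; [apply continuity_pt_const; intros ??; reflexivity|].
    apply ex_derive_continuity, Hf.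
  - exists z. split; lra.
Qed.

(* An injective curve of constant speed [c] that is shifted by [be] under [s |-> s + l]
   moves monotonically, so the mean value theorem gives [be = f' s0 * l]. *)
Lemma shift_eq_derive_mul (f : R -> R) c l be s0 : 0 < c -> 0 < l ->
  (forall s, ex_derive f s) -> (forall s, Derive f s ^ 2 = c ^ 2) ->
  (forall s1 s2, f s1 = f s2 -> s1 = s2) -> (forall s, f (s + l) = f s + be) ->
  be = Derive f s0 * l.
Proof.
  intros Hc Hl Hf Hspeed Hinj Hshift.
  destruct (MVT_gen f s0 (s0 + l) (Derive f)) as [xi [Hxi Hmvt]].
  - intros x _. apply Derive_correct, Hf.
  - intros x _. apply ex_derive_continuity, Hf.
  - rewrite Hshift in Hmvt. replace (f s0 + be - f s0) with be in Hmvt by ring.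
    replace (s0 + l - s0) with l in Hmvt by ring.
    assert (Hxi2 := Hspeed xi). assert (Hs02 := Hspeed s0).
    assert (Hsign : Derive f xi = Derive f s0 \/ Derive f xi = - Derive f s0).
    { assert (Hprod : (Derive f xi - Derive f s0) * (Derive f xi + Derive f s0) = 0) by nra.
      apply Rmult_integral in Hprod. destruct Hprod; [left|right]; lra. }
    destruct Hsign as [E|E]; [rewrite Hmvt, E; ring|exfalso].
    destruct (Rlt_or_le 0 (Derive f s0)) as [Hp|Hn].
    + destruct (not_injective_of_decrease f s0 (Derive f s0) l Hf
                  (Derive_correct _ _ (Hf s0)) Hp Hl)
        as [s [Hs1 Hs2]]; [|exact (Hs1 (Hinj _ _ Hs2))].
      rewrite Hshift, Hmvt, E. assert (0 < Derive f s0 * l) by (apply Rmult_lt_0_compat; lra). lra.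
    + assert (Hn' : 0 < - Derive f s0).
      { assert (Derive f s0 <> 0) by (intro F; rewrite F in Hs02; nra). lra. }
      assert (Hfopp : forall s, ex_derive (fun x => - f x) s) by (intro s; auto_derive; apply Hf).
      assert (Hdopp : is_derive (fun x => - f x) s0 (- Derive f s0))
        by (auto_derive; [apply Hf|rewrite Rmult_1_l; reflexivity]).
      destruct (not_injective_of_decrease (fun x => - f x) s0 _ l Hfopp Hdopp Hn' Hl)
        as [s [Hs1 Hs2]]; [|apply Hs1, Hinj; lra].
      rewrite Hshift, Hmvt, E.
      assert (0 < - Derive f s0 * l) by (apply Rmult_lt_0_compat; lra). lra.
Qed.

Lemma horocycle_conj_translation S p h ell : is_horocycle S -> is_parabolic p ->
  pos_param S p h ell -> exists G c be, mdet G = 1 /\ 0 < c /\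
    (forall s, inH (h s) /\ snd (mob_act G (h s)) = c) /\
    (forall z, inH z -> mob_act G (mob_act p z) = (fst (mob_act G z) + be, snd (mob_act G z))).
Proof.
  intros Hhor Hpar [[HhS [Hsurj _]] [_ Hper]].
  destruct (horocycle_to_horizontal S Hhor) as [G [c [HG [Hc [HS1 HS2]]]]].
  assert (Hp : mdet p = 1) by (destruct Hpar; unfold mdet; lra).
  assert (HGi : 0 < mdet (mob_inv G)) by (rewrite mdet_inv; lra).
  set (q := mmul G (mmul p (mob_inv G))).
  assert (Hq : forall w, inH w -> mob_act q w = mob_act G (mob_act p (mob_act (mob_inv G) w))).
  { intros w Hw. unfold q.
    rewrite <- (mob_act_mul G (mmul p (mob_inv G)) w) by (rewrite ?mdet_mul; nra || assumption).
    rewrite <- (mob_act_mul p (mob_inv G) w) by (lra || assumption). reflexivity. }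
  assert (Hline : forall x, snd (mob_act q (x, c)) = c).
  { intro x. assert (Hw : inH (x, c)) by (unfold inH; simpl; lra).
    rewrite Hq by exact Hw. destruct (Hsurj _ (HS2 (x, c) Hw eq_refl)) as [s <-].
    rewrite Hper. apply HS1, HhS. }
  assert (Hqdet : mdet q = 1) by (unfold q; rewrite !mdet_mul, mdet_inv, Hp, HG; ring).
  exists G, c, (mb q * md q). split; [exact HG|]. split; [exact Hc|]. split.
  - intro s. apply HS1, HhS.
  - intros z Hz. rewrite <- (mob_act_fix_horizontal q c Hqdet Hc Hline), Hq
      by (apply mob_act_inH; [lra|assumption]).
    rewrite mob_act_invK by (lra || assumption). reflexivity.
Qed.

Lemma mob_act_horizontal_speed G h c s a b : 0 < mdet G -> inH (h s) ->
  (forall s, snd (mob_act G (h s)) = c) ->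
  is_derive (fun r => fst (h r)) s a -> is_derive (fun r => snd (h r)) s b ->
  a ^ 2 + b ^ 2 = snd (h s) ^ 2 ->
  is_derive (fun r => fst (mob_act G (h r))) s (mob_dx G (h s) a b) /\
  mob_dy G (h s) a b = 0 /\ mob_dx G (h s) a b ^ 2 = c ^ 2.
Proof.
  intros HG Hh Hc Da Db Hspeed.
  destruct (mob_act_derive G h s a b HG Hh Da Db) as [Dx Dy].
  assert (Hdy : mob_dy G (h s) a b = 0).
  { rewrite <- (is_derive_unique _ _ _ Dy). apply is_derive_unique.
    apply (is_derive_ext (fun _ => c)); [intro; symmetry; apply Hc|]. auto_derive; auto. }
  split; [exact Dx|]. split; [exact Hdy|].
  assert (Hn := mob_d_norm G (h s) a b HG Hh Hspeed). rewrite Hdy, Hc in Hn. simpl in *. lra.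
Qed.

Lemma derive_aff (f : R -> R) t d k1 k2 k3 : k3 <> 0 -> is_derive f t d ->
  is_derive (fun r => k1 * (f r - k2) / k3) t (k1 * d / k3).
Proof.
  intros Hk Hf. auto_derive; [exists d; exact Hf|].
  replace (Derive (fun x => f x) t) with d by (symmetry; apply is_derive_unique, Hf).
  field. exact Hk.
Qed.

Lemma horizontal_param_derive S G h c : arclength_param S h -> 0 < mdet G ->
  (forall s, inH (h s) /\ snd (mob_act G (h s)) = c) ->
  forall s a b, is_derive (fun r => fst (h r)) s a -> is_derive (fun r => snd (h r)) s b ->
  is_derive (fun r => fst (mob_act G (h r))) s (mob_dx G (h s) a b) /\
  mob_dy G (h s) a b = 0 /\ mob_dx G (h s) a b ^ 2 = c ^ 2.
Proof.
  intros [_ [_ [_ Hder]]] HG Hh s a b Da Db.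
  apply mob_act_horizontal_speed; try assumption; try apply Hh.
  destruct (Hder s) as [a' [b' [Da' [Db' Hspeed]]]].
  replace a with a'
    by (rewrite <- (is_derive_unique _ _ _ Da); symmetry; apply is_derive_unique, Da').
  replace b with b'
    by (rewrite <- (is_derive_unique _ _ _ Db); symmetry; apply is_derive_unique, Db').
  exact Hspeed.
Qed.

Lemma horizontal_param_shift S G h c be ell s0 : arclength_param S h -> 0 < mdet G ->
  0 < c -> 0 < ell -> (forall s, inH (h s) /\ snd (mob_act G (h s)) = c) ->
  (forall s, fst (mob_act G (h (s + ell))) = fst (mob_act G (h s)) + be) ->
  be = Derive (fun s => fst (mob_act G (h s))) s0 * ell.
Proof.
  intros Hparam HG Hc Hell Hh Hshift.
  assert (HD := horizontal_param_derive S G h c Hparam HG Hh).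
  destruct Hparam as [_ [_ [Hinj Hder]]].
  apply (shift_eq_derive_mul _ c); try assumption.
  - intro s. destruct (Hder s) as [a [b [Da [Db _]]]]. eexists. apply (HD s a b Da Db).
  - intro s. destruct (Hder s) as [a [b [Da [Db _]]]]. destruct (HD s a b Da Db) as [Dx [_ Hsq]].
    rewrite <- Hsq. f_equal. apply is_derive_unique, Dx.
  - intros s1 s2 E. apply Hinj.
    rewrite <- (mob_act_invK G (h s1)), <- (mob_act_invK G (h s2)) by (apply Hh || lra).
    f_equal. apply injective_projections; [exact E|]. rewrite !(proj2 (Hh _)). reflexivity.
Qed.

(* Conjugate the horocycle to a horizontal line, [p] to a translation, then move the
   tangency point of [u] to [i]; the sign [al / c] fixes the orientation, and the positive
   orientation of [(S, p)] makes the translation length [ell]. *)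
Lemma normalizing_isometry S p h ell u :
  is_horocycle S -> is_parabolic p -> pos_param S p h ell -> is_geodesic u -> tangent_to u h ->
  exists F t0, 0 <= t0 /\ isometry F /\
    (forall z, inH z -> F (mob_act p z) = transl ell (F z)) /\
    F (u t0) = (0, 1) /\ is_derive (fun r => fst (F (u r))) t0 1 /\
    is_derive (fun r => snd (F (u r))) t0 0.
Proof.
  intros Hhor Hpar Hpos Hgu [t0 [s0 [a [b [Ht0 [Hus [Hua [Hub [Hha Hhb]]]]]]]]].
  destruct (horocycle_conj_translation S p h ell Hhor Hpar Hpos) as [G [c [be [HG [Hc [Hh HGp]]]]]].
  destruct Hpos as [Hparam [Hell Hper]].
  assert (HG0 : 0 < mdet G) by lra.
  assert (HD := horizontal_param_derive S G h c Hparam HG0 Hh).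
  set (X := fun s => fst (mob_act G (h s))).
  assert (Hbe : be = Derive X s0 * ell).
  { apply (horizontal_param_shift S G h c); try assumption.
    intro s. rewrite <- Hper, HGp by apply Hh. reflexivity. }
  destruct (HD s0 a b Hha Hhb) as [Dh [Hdy Hsq]].
  assert (Hal : mob_dx G (h s0) a b = Derive X s0) by (symmetry; apply is_derive_unique, Dh).
  destruct (mob_act_derive G u t0 a b HG0 ltac:(apply Hgu) Hua Hub) as [Dux Duy].
  rewrite Hus, Hal in Dux. rewrite Hus, Hdy in Duy. rewrite Hal in Hsq.
  set (al := Derive X s0) in *.
  assert (Hsg : (al / c) ^ 2 = 1).
  { replace ((al / c) ^ 2) with (al ^ 2 / c ^ 2) by (field; lra). rewrite Hsq. field. lra. }
  exists (fun z => aff (al / c) (X s0) c (mob_act G z)), t0.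
  split; [exact Ht0|]. split; [split|split; [|split; [|split]]].
  - intros z Hz. unfold aff, inH. cbn [fst snd]. apply Rdiv_lt_0_compat; [|exact Hc].
    apply mob_act_inH; assumption.
  - intros z w Hz Hw. rewrite hdist_aff, hdist_mob_act by (try apply mob_act_inH; assumption).
    reflexivity.
  - intros z Hz. rewrite HGp by exact Hz. unfold aff, transl; cbn [fst snd]. f_equal.
    rewrite Hbe. transitivity (al / c * (fst (mob_act G z) - X s0) / c + (al / c) ^ 2 * ell);
      [field; lra|]. rewrite Hsg. ring.
  - rewrite Hus. unfold aff. rewrite (proj2 (Hh s0)). fold (X s0). f_equal; field; lra.
  - replace 1 with (al / c * al / c) by (rewrite <- Hsg; field; lra).
    apply (derive_aff (fun r => fst (mob_act G (u r)))); [lra|exact Dux].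
  - replace 0 with (1 * 0 / c) by (field; lra).
    apply (is_derive_ext (fun r => 1 * (snd (mob_act G (u r)) - 0) / c)).
    { intro. unfold aff. cbn [fst snd]. rewrite Rmult_1_l, Rminus_0_r. reflexivity. }
    apply (derive_aff (fun r => snd (mob_act G (u r)))); [lra|exact Duy].
Qed.

(** * Transport by an isometry *)

Lemma isometry_geodesic F c : isometry F -> is_geodesic c -> is_geodesic (fun t => F (c t)).
Proof.
  intros [HFin HFd] [Hcin Hcd]. split; [intro; apply HFin, Hcin|].
  intros s t. rewrite HFd by apply Hcin. apply Hcd.
Qed.

Lemma isometry_dist_d1 F v w : isometry F -> (forall t, inH (v t)) -> (forall t, inH (w t)) ->
  dist_d1 (fun t => F (v t)) (fun t => F (w t)) = dist_d1 v w.
Proof.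
  intros [_ HFd] Hv Hw. unfold dist_d1. rewrite !HFd by (apply Hv || apply Hw). reflexivity.
Qed.

Section Conjugation.

Variables (F : pt -> pt) (p : mob) (ell : R).
Hypotheses (HF : isometry F) (Hp : 0 < mdet p)
  (Hconj : forall z, inH z -> F (mob_act p z) = transl ell (F z)).

Lemma isometry_conj_inv z : inH z -> F (mob_act (mob_inv p) z) = transl (- ell) (F z).
Proof.
  intro Hz. rewrite <- (mob_act_Kinv p z Hp Hz) at 2.
  rewrite Hconj by (apply mob_act_inH; [rewrite mdet_inv|]; assumption).
  unfold transl; simpl. destruct (F (mob_act (mob_inv p) z)). simpl. f_equal; ring.
Qed.

Lemma isometry_winding_time u : is_geodesic u ->
  winding_time p u = busemann (fun t => F (u t)) (transl (- ell) (F (u 0))) (F (u 0)).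
Proof.
  intros [Hu _]. destruct HF as [_ HFd]. unfold winding_time, busemann.
  rewrite <- isometry_conj_inv by apply Hu.
  do 2 f_equal. apply functional_extensionality. intro t.
  rewrite !HFd by (try apply mob_act_inH; try rewrite mdet_inv; try apply Hu; assumption).
  reflexivity.
Qed.

Lemma isometry_dist_d1_conj v w : (forall t, inH (v t)) -> (forall t, inH (w t)) ->
  dist_d1 v (fun s => mob_act p (w s)) = dist_d1 (fun t => F (v t)) (fun s => transl ell (F (w s))).
Proof.
  intros Hv Hw. rewrite <- (isometry_dist_d1 F v (fun s => mob_act p (w s)) HF Hv)
    by (intro; apply mob_act_inH; [|apply Hw]; assumption).
  unfold dist_d1. rewrite !Hconj by apply Hw. reflexivity.
Qed.

End Conjugation.

Theorem mainTheorem4 (S : pt -> Prop) (p : mob) (h : R -> pt) (ell : R)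
    (u v : R -> pt) :
  is_horocycle S -> is_parabolic p -> pos_param S p h ell ->
  is_geodesic u -> tangent_to u h ->
  is_winding p u v ->
  forall t : R, 0 <= t ->
    Rmin (dist_d1 (gflow (t + winding_time p u) v) (gflow t u))
         (dist_d1 (gflow (t + winding_time p u) v)
             (fun s => mob_act p (gflow t u s)))
    <= 12 * ell.
Proof.
  intros Hhor Hpar Hpos Hgu Htan [Hgv [Hv0 [M HM]]] t Ht.
  destruct (normalizing_isometry S p h ell u Hhor Hpar Hpos Hgu Htan)
    as [F [t0 [Ht0 [HF [Hconj [Hut0 [Hdx Hdy]]]]]]].
  assert (Hp : 0 < mdet p) by (destruct Hpar; unfold mdet; lra).
  assert (Hv : forall s, inH (v s)) by apply Hgv. assert (Hu : forall s, inH (u s)) by apply Hgu.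
  rewrite (isometry_winding_time F p ell HF Hp Hconj u Hgu).
  set (tau := busemann (fun r => F (u r)) (transl (- ell) (F (u 0))) (F (u 0))).
  rewrite <- (isometry_dist_d1 F (gflow (t + tau) v) (gflow t u) HF),
    (isometry_dist_d1_conj F p ell HF Hp Hconj) by (intro; apply Hv || apply Hu).
  apply (normalized_winding_bound ell t0 (fun r => F (u r)) (fun r => F (v r)));
    try assumption.
  - destruct Hpos as [_ [Hell _]]. exact Hell.
  - apply isometry_geodesic; assumption.
  - apply isometry_geodesic; assumption.
  - simpl. rewrite Hv0. reflexivity.
  - exists M. intros s Hs. rewrite <- Hconj by apply Hu.
    rewrite (proj2 HF) by (apply Hv || apply mob_act_inH, Hu; assumption). apply HM, Hs.
Qed.
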